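(* Let $e\in E_A$. Suppose the monitor state of lifeline $A$ is coherent before evaluating formulas at $e$. Then, for every $\psi\in\mathsf{sub}(\Phi)$, \[ \mathsf{Eval}_A(\psi,e,\mathsf{old}_A)=1 \quad\text{iff}\quad M,e\models\psi . \]
   Context: Setting. $\mathscr L$ is a finite set of lifelines. A message sequence chart (MSC) is $M=(E,\to,\lhd,\mathsf{kind},\mathsf{pid},\mathsf{val})$ with $E$ a finite set of events, $\mathsf{pid}:E\to\mathscr L$, $E_A=\{e\in E\mid \mathsf{pid}(e)=A\}$. The relation $\to$ relates only events on the same lifeline, and for each $A$ its restriction to $E_A$ is the immediate-successor relation of a finite linear order $\leq_A$ (strict version $<_A$). $\mathsf{kind}(e)\in\{\mathsf{act},\mathsf{recv},\mathsf{choice}\}\cup(\{\mathsf{send}\}\times\mathscr L)$. The message relation $\lhd$ is a partial matching: if $s\lhd r$ then $\mathsf{kind}(s)=(\mathsf{send},\mathsf{pid}(r))$, $\mathsf{kind}(r)=\mathsf{recv}$, $\mathsf{pid}(s)\neq\mathsf{pid}(r)$; every receive has exactly one matching send, every send at most one matching receive (not necessarily FIFO). The graph of $\to$ and $\lhd$ edges is acyclic; the causal order $\leq_M$ is its reflexive transitive closure. $\nu_e=\mathsf{val}(e)$ is the valuation (local store of $\mathsf{pid}(e)$ after $e$). $e^B_k$ is the $k$-th event of lifeline $B$ (indexing from 1). Causal Past Logic (CPL): terms $t::=x\mid A.x$ (the value of $x$ at the latest causally visible $A$-event); atoms $\alpha::=p(t_1,\dots,t_n)$; formulas $\varphi::=\alpha\mid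 @_A\varphi\mid \mathsf{Y}\varphi\mid\varphi_1\mathbin{\mathsf{S}}\varphi_2\mid\varphi_1\wedge\varphi_2\mid\varphi_1\vee\varphi_2\mid\neg\varphi$. For $e$ with $\mathsf{pid}(e)=A$: $\mathsf{last}_{\mathsf{loc}}(e)=\max\{f\in E_A\mid f<_A e\}$ and, for any $B$, $\mathsf{last}_B(e)=\max\{f\in E_B\mid f\leq_M e\}$ (when these exist). Term values: $x$ evaluates to $\nu_e(x)$; $A.x$ evaluates to $\nu_{\mathsf{last}_A(e)}(x)$ when defined. An atom is false if any of its terms is undefined; otherwise its truth ($\nu_e\models_M\alpha$) is fixed by the application. $M,e\models\mathsf{Y}\varphi$ iff $\mathsf{last}_{\mathsf{loc}}(e)$ exists and satisfies $\varphi$; $M,e\models @_A\varphi$ iff $\mathsf{last}_A(e)$ exists and satisfies $\varphi$ (non-strict: equals $e$ if $e\in E_A$); for $e\in E_A$, $M,e\models\varphi_1\mathbin{\mathsf{S}}\varphi_2$ iff some $f\in E_A$ with $f\leq_A e$ satisfies $\varphi_2$ and every $g\in E_A$ with $f<_A g\leq_A e$ satisfies $\varphi_1$; Boolean connectives as usual. Monitor. $\Phi$ is a finite set of CPL formulas, $\mathsf{sub}(\Phi)$ its subformulas, $\mathsf{Vars}(\Phi)$ the variable names occurring in terms $B.x$. Each lifeline $A$ keeps: a vector clock $\mathsf{vc}_A:\mathscr L\to\mathbb N$; a partial Boolean view $\mathsf{view}_A:\mathscr L\times\mathsf{sub}(\Phi)\rightharpoonup\{0,1\}$; a partial variable view $\mathsf{var}_A:\mathscr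 L\times\mathsf{Vars}(\Phi)\rightharpoonup\mathsf{Val}$; a local store $\sigma_A$; a total map $\mathsf{old}_A:\mathsf{sub}(\Phi)\to\{0,1\}$. The procedure $\mathsf{Eval}_A(\psi,e,\mathsf{old}_A)$ computes: for an atom $\alpha$, its truth with unqualified variables read from $\sigma_A$ and terms $B.x$ read from $\mathsf{var}_A(B,x)$ (a missing entry makes the atom false); $\mathsf{Y}\theta\mapsto(\mathsf{vc}_A(A)>1)\wedge\mathsf{old}_A(\theta)$; $@_B\theta\mapsto$ $\mathsf{Eval}_A(\theta,e,\mathsf{old}_A)$ if $B=A$, else $0$ if $\mathsf{vc}_A(B)=0$, else $\mathsf{view}_A(B,\theta)$; $\theta_1\mathbin{\mathsf{S}}\theta_2\mapsto \mathsf{Eval}_A(\theta_2,\cdot)\vee(\mathsf{Eval}_A(\theta_1,\cdot)\wedge(\mathsf{vc}_A(A)>1)\wedge\mathsf{old}_A(\theta_1\mathbin{\mathsf{S}}\theta_2))$; $\neg,\wedge,\vee$ computed recursively. Coherence. For $e\in E_A$, the state of $A$ is coherent before evaluating formulas at $e$ if: (i) for every lifeline $B$, $\mathsf{vc}_A(B)=|\{f\in E_B\mid f\leq_M e\}|$; (ii) for every $B\neq A$ with $k=\mathsf{vc}_A(B)>0$, $\mathsf{view}_A(B,\psi)$ is defined and equals $1$ iff $M,e^B_k\models\psi$ for all $\psi\in\mathsf{sub}(\Phi)$, and $\mathsf{var}_A(B,x)=\mathsf{val}(e^B_k)(x)$ for all $x\in\mathsf{Vars}(\Phi)$; if $\mathsf{vc}_A(B)=0$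 all entries for $B$ are absent; (iii) $\sigma_A(x)=\mathsf{val}(e)(x)$ for every monitored unqualified variable $x$, and $\mathsf{var}_A(A,x)$ is defined and equal to $\mathsf{val}(e)(x)$ for every $x\in\mathsf{Vars}(\Phi)$ (no condition on $\mathsf{view}_A(A,\cdot)$); (iv) for every $\psi\in\mathsf{sub}(\Phi)$, $\mathsf{old}_A(\psi)$ is the truth value of $\psi$ at the previous local event of $A$ if it exists, and false otherwise. *)

From mathcomp Require Import all_boot.
From Stdlib Require Import List.

Set Implicit Arguments.
Unset Strict Implicit.
Unset Printing Implicit Defensive.

Section MSCDefs.

(* Lifelines (finite), variable names, values, atomic predicate symbols. *)
Variables (L : finType) (X Val P : Type).

Inductive kind_t := KAct | KRecv | KChoice | KSend of L.

(* A message sequence chart.  [lle] is the per-lifeline linear order <=_A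
   (relating only events on the same lifeline); [succ] is the relation ->,
   required to be exactly the immediate-successor relation of <=_A. *)
Record MSC := {
  ev : finType;
  pid : ev -> L;
  succ : rel ev;
  msg : rel ev;
  kind : ev -> kind_t;
  val : ev -> X -> Val;
  lle : rel ev;
  lle_pid : forall e f, lle e f -> pid e = pid f;
  lle_refl : forall e, lle e e;
  lle_anti : forall e f, lle e f -> lle f e -> e = f;
  lle_trans : forall e f g, lle e f -> lle f g -> lle e g;
  lle_total : forall e f, pid e = pid f -> lle e f || lle f e;
  succ_spec : forall e f, succ e f <->
     [/\ pid e = pid f, lle e f, e <> f &
         forall g, lle e g -> lle g f -> g = e \/ g = f];
  msg_kind : forall s r, msg s r ->
     [/\ kind s = KSend (pid r), kind r = KRecv & pid s <> pid r];
  recv_has_send : forall r, kind r = KRecv ->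
     exists s, msg s r /\ forall s', msg s' r -> s' = s;
  send_at_most_once : forall s r r', msg s r -> msg s r' -> r = r';
  acyclic : forall e f, (succ e f || msg e f) ->
     ~~ connect (fun a b => succ a b || msg a b) f e
}.

Inductive term := TVar of X | TQual of L & X.

Inductive form :=
| FAtom of P & list term
| FAt of L & form
| FY of form
| FS of form & form
| FAnd of form & form
| FOr of form & form
| FNot of form.

Fixpoint opt_all (s : list (option Val)) : option (list Val) :=
  match s with
  | nil => Some nil
  | cons None _ => None
  | cons (Some v) s' => omap (cons v) (opt_all s')
  end.

Variable M : MSC.
Variable interp : P -> list Val -> bool.

Definition edge : rel (ev M) := fun a b => succ a b || msg a b.
Definition causal (f e : ev M) : bool := connect edge f e.
Definition llt (f e : ev M) : bool := lle f e && (f != e).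

Definition last_loc (e : ev M) : option (ev M) :=
  [pick f | [&& pid f == pid e, llt f e &
     [forall g, ((pid g == pid e) && llt g e) ==> lle g f]]].

Definition last_of (B : L) (e : ev M) : option (ev M) :=
  [pick f | [&& pid f == B, causal f e &
     [forall g, ((pid g == B) && causal g e) ==> lle g f]]].

Definition term_val (e : ev M) (t : term) : option Val :=
  match t with
  | TVar x => Some (val e x)
  | TQual B x => omap (fun f => val f x) (last_of B e)
  end.

Definition atom_holds (e : ev M) (p : P) (ts : list term) : bool :=
  match opt_all (map (term_val e) ts) with
  | Some vs => interp p vs
  | None => false
  end.

Fixpoint sat (phi : form) (e : ev M) {struct phi} : Prop :=
  match phi with
  | FAtom p ts => atom_holds e p ts
  | FAt B psi => exists f, last_of B e = Some f /\ sat psi f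
  | FY psi => exists f, last_loc e = Some f /\ sat psi f
  | FS psi1 psi2 => exists f, [/\ pid f = pid e, lle f e, sat psi2 f &
       forall g, pid g = pid e -> llt f g -> lle g e -> sat psi1 g]
  | FAnd psi1 psi2 => sat psi1 e /\ sat psi2 e
  | FOr psi1 psi2 => sat psi1 e \/ sat psi2 e
  | FNot psi => ~ sat psi e
  end.

(* e^B_k : the k-th event (1-based) of lifeline B *)
Definition kth (B : L) (k : nat) (f : ev M) : bool :=
  (pid f == B) && (#|[pred g | (pid g == B) && lle g f]| == k).

End MSCDefs.

Section Monitor.
Variables (L : finType) (X Val P : Type).

Fixpoint subf (phi : form L X P) : list (form L X P) :=
  phi :: match phi with
         | FAtom _ _ => nil
         | FAt _ psi | FY psi | FNot psi => subf psi
         | FS a b | FAnd a b | FOr a b => subf a ++ subf b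
         end.

Definition in_sub (Phi : list (form L X P)) (psi : form L X P) : Prop :=
  exists phi, In phi Phi /\ In psi (subf phi).

Fixpoint qvars (phi : form L X P) : list X :=
  match phi with
  | FAtom _ ts => flat_map (fun t => match t with TQual _ x => x :: nil | TVar _ => nil end) ts
  | FAt _ psi | FY psi | FNot psi => qvars psi
  | FS a b | FAnd a b | FOr a b => qvars a ++ qvars b
  end.

Fixpoint uvars (phi : form L X P) : list X :=
  match phi with
  | FAtom _ ts => flat_map (fun t => match t with TVar x => x :: nil | TQual _ _ => nil end) ts
  | FAt _ psi | FY psi | FNot psi => uvars psi
  | FS a b | FAnd a b | FOr a b => uvars a ++ uvars b
  end.

Definition in_Vars (Phi : list (form L X P)) (x : X) : Prop :=
  exists phi, In phi Phi /\ In x (qvars phi).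

Definition in_UVars (Phi : list (form L X P)) (x : X) : Prop :=
  exists phi, In phi Phi /\ In x (uvars phi).

Record mstate := {
  vc : L -> nat;
  view : L -> form L X P -> option bool;
  var : L -> X -> option Val;
  sigma : X -> Val;
  old : form L X P -> bool
}.

Variable interp : P -> list Val -> bool.

(* Eval_A(psi, e, old_A); the event e plays no role in the computation. *)
Fixpoint Eval (A : L) (st : mstate) (oldA : form L X P -> bool)
    (psi : form L X P) {struct psi} : bool :=
  match psi with
  | FAtom p ts =>
      match opt_all (map (fun t => match t with
                                   | TVar x => Some (sigma st x)
                                   | TQual B x => var st B x
                                   end) ts) with
      | Some vs => interp p vs
      | None => false
      end
  | FY th => (1 < vc st A) && oldA th
  | FAt B th =>
      if B == A then Eval A st oldA th
      else if vc st B == 0 then false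
      else odflt false (view st B th)
  | FS th1 th2 =>
      Eval A st oldA th2 ||
      [&& Eval A st oldA th1, 1 < vc st A & oldA (FS th1 th2)]
  | FAnd a b => Eval A st oldA a && Eval A st oldA b
  | FOr a b => Eval A st oldA a || Eval A st oldA b
  | FNot a => ~~ Eval A st oldA a
  end.

Definition coherent (M : MSC L X Val) (Phi : list (form L X P)) (A : L)
    (st : mstate) (e : ev M) : Prop :=
  [/\ (* (i) *)
      forall B, vc st B = #|[pred f | (pid f == B) && causal f e]|,
      (* (ii) *)
      (forall B, B <> A -> 0 < vc st B ->
         forall f : ev M, kth B (vc st B) f ->
           (forall psi, in_sub Phi psi ->
              exists b, view st B psi = Some b /\ (b = true <-> sat interp psi f)) /\
           (forall x, in_Vars Phi x -> var st B x = Some (val f x))),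
      (forall B, B <> A -> vc st B = 0 ->
         (forall psi, in_sub Phi psi -> view st B psi = None) /\
         (forall x, in_Vars Phi x -> var st B x = None)),
      (forall x, in_UVars Phi x -> sigma st x = val e x) /\
      (forall x, in_Vars Phi x -> var st A x = Some (val e x)) &
      forall psi, in_sub Phi psi ->
        (old st psi = true <-> exists f, last_loc e = Some f /\ sat interp psi f)].

End Monitor.

From Pilot Require Import Defs.
From mathcomp Require Import all_boot.
From mathcomp Require Import zify.
From Stdlib Require Import List.

Set Implicit Arguments.
Unset Strict Implicit.
Unset Printing Implicit Defensive.

(* A term B.x reads the last
   causally visible B-event, and by coherence (i) that event is the
   vc_A(B)-th event of B, whose values and subformula truths coherence (ii)
   supplies; for B = A it is e itself, since causality restricted to one
   lifeline is the lifeline order (a causal path going backwards along a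
   lifeline would close a cycle).  Y reads old_A, and vc_A(A) > 1 holds
   whenever e has a local predecessor.  S is handled by the expansion law
   a S b <-> b \/ (a /\ Y (a S b)). *)

Section LifelineOrder.
Variables (L : finType) (X Val : Type) (M : MSC L X Val).
Implicit Types e f g : ev M.

Definition height f := #|[pred h | lle h f]|.

Lemma height_lt f g : lle f g -> f != g -> height f < height g.
Proof.
move=> le_fg ne_fg; apply: proper_card; apply/properP; split.
  by apply/subsetP => h; rewrite !inE => le_hf; apply: lle_trans le_hf le_fg.
exists g; rewrite !inE ?lle_refl //; apply/negP => le_gf.
by move/eqP: ne_fg; apply; apply: lle_anti.
Qed.

Lemma height_le f g : lle f g -> height f <= height g.
Proof.
move=> le_fg; apply/subset_leq_card/subsetP => h; rewrite !inE => le_hf.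
exact: lle_trans le_hf le_fg.
Qed.

Lemma height_lle f g : pid f = pid g -> height f <= height g -> lle f g.
Proof.
move=> pid_fg le_h; case/orP: (lle_total pid_fg) => // le_gf.
have [-> | ne_gf] := eqVneq g f; first exact: lle_refl.
by move: (height_lt le_gf ne_gf); rewrite ltnNge le_h.
Qed.

Lemma exists_lle_max (S : pred (ev M)) B f0 :
  S f0 -> (forall g, S g -> pid g = B) -> exists m, S m /\ forall g, S g -> lle g m.
Proof.
move=> Sf0 pidS; case: (arg_maxnP height Sf0) => m Sm max_m.
exists m; split=> // g Sg; apply: height_lle; last exact: max_m.
by rewrite (pidS _ Sg) (pidS _ Sm).
Qed.

Lemma exists_lle_min (S : pred (ev M)) B f0 :
  S f0 -> (forall g, S g -> pid g = B) -> exists m, S m /\ forall g, S g -> lle m g.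
Proof.
move=> Sf0 pidS; case: (arg_minnP height Sf0) => m Sm min_m.
exists m; split=> // g Sg; apply: height_lle; last exact: min_m.
by rewrite (pidS _ Sm) (pidS _ Sg).
Qed.

(* The successor of e towards f is the least element of the interval ]e, f]. *)
Lemma lle_succ_step e f : lle e f -> e != f -> exists2 m, succ e m & lle m f.
Proof.
move=> le_ef ne_ef.
have [m [/and3P[le_em ne_me le_mf] min_m]] :
    exists m, [&& lle e m, m != e & lle m f] /\
      forall g, [&& lle e g, g != e & lle g f] -> lle m g.
  apply: (@exists_lle_min _ (pid e) f); first by rewrite /= le_ef eq_sym ne_ef lle_refl.
  by move=> g /and3P[le_eg _ _]; rewrite (lle_pid le_eg).
exists m => //; apply/succ_spec; split; [exact: lle_pid le_em | done | |].
  by move=> eq_em; rewrite eq_em eqxx in ne_me.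
move=> g le_eg le_gm; have [-> | ne_ge] := eqVneq g e; first by left.
right; apply: (lle_anti le_gm); apply: min_m.
by rewrite le_eg ne_ge (lle_trans le_gm le_mf).
Qed.

Lemma lle_connect_succ e f : lle e f -> connect (@succ _ _ _ M) e f.
Proof.
have [n] := ubnP (height f - height e); elim: n e => // n IH e lt_hn le_ef.
have [-> | ne_ef] := eqVneq e f; first exact: connect0.
have [m succ_em le_mf] := lle_succ_step le_ef ne_ef.
apply: connect_trans (connect1 succ_em) (IH m _ le_mf).
have [_ le_em ne_em _] := (succ_spec e m).1 succ_em.
have := height_lt le_em (introN eqP ne_em); have := height_le le_mf.
by rewrite ltnS in lt_hn; lia.
Qed.

Lemma lle_causal e f : lle e f -> causal e f.
Proof.
move/lle_connect_succ; apply: connect_sub => a b succ_ab.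
by apply: connect1; rewrite /edge succ_ab.
Qed.

Lemma causal_lle f e : pid f = pid e -> causal f e -> lle f e.
Proof.
move=> pid_fe cause_fe; case/orP: (lle_total pid_fe) => // le_ef.
have [-> | ne_ef] := eqVneq e f; first exact: lle_refl.
case/connectP: (lle_causal le_ef) => [[|a p]] /=.
  by move=> _ eq_fe; rewrite eq_fe eqxx in ne_ef.
case/andP=> edge_ea path_ap last_ap; case/negP: (acyclic edge_ea).
by apply: connect_trans cause_fe; apply/connectP; exists p.
Qed.

Lemma last_ofP B e f : last_of B e = Some f ->
  [/\ pid f = B, causal f e & forall g, pid g = B -> causal g e -> lle g f].
Proof.
rewrite /last_of; case: pickP => // m /and3P[/eqP pid_m cause_m /forallP max_m] [<-].
by split=> // g pid_g cause_g; apply: (implyP (max_m g)); rewrite pid_g eqxx.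
Qed.

Lemma last_of_some B e f : pid f = B -> causal f e ->
  (forall g, pid g = B -> causal g e -> lle g f) -> last_of B e = Some f.
Proof.
move=> pid_f cause_f max_f; rewrite /last_of; case: pickP => [m | none].
  case/and3P=> /eqP pid_m cause_m /forallP max_m; congr Some.
  by apply: lle_anti (max_f _ pid_m cause_m) _; apply: (implyP (max_m f)); rewrite pid_f eqxx.
case/negP: (negbT (none f)); rewrite pid_f eqxx cause_f.
by apply/forallP => g; apply/implyP => /andP[/eqP]; apply: max_f.
Qed.

Lemma last_of_self e : last_of (pid e) e = Some e.
Proof. by apply: last_of_some => // [|g]; [apply: connect0 | apply: causal_lle]. Qed.

Lemma last_locP e p : last_loc e = Some p ->
  [/\ pid p = pid e, llt p e & forall g, pid g = pid e -> llt g e -> lle g p].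
Proof.
rewrite /last_loc; case: pickP => // m /and3P[/eqP pid_m lt_me /forallP max_m] [<-].
by split=> // g pid_g lt_ge; apply: (implyP (max_m g)); rewrite pid_g eqxx.
Qed.

Lemma last_loc_exists e f : pid f = pid e -> llt f e -> exists p, last_loc e = Some p.
Proof.
move=> pid_f lt_fe; rewrite /last_loc; case: pickP => [m _ | none]; first by exists m.
have [m [Sm max_m]] : exists m, ((pid m == pid e) && llt m e) /\
    forall g, (pid g == pid e) && llt g e -> lle g m.
  apply: (@exists_lle_max _ (pid e) f); first by rewrite /= pid_f eqxx.
  by move=> g /andP[/eqP].
case/negP: (negbT (none m)); case/andP: Sm => -> -> /=; apply/forallP => g; apply/implyP/max_m.
Qed.

Definition past_count B e := #|[pred f | (pid f == B) && causal f e]|.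

Lemma past_count0_last_of B e : past_count B e = 0 -> last_of B e = None.
Proof.
move/card0_eq=> none; rewrite /last_of; case: pickP => // m /and3P[pid_m cause_m _].
by move: (none m); rewrite inE pid_m cause_m.
Qed.

Lemma past_count_gt0_last_of B e : 0 < past_count B e ->
  exists2 f, last_of B e = Some f & kth B (past_count B e) f.
Proof.
case/card_gt0P=> f0 seen_f0.
have [m [/andP[/eqP pid_m cause_m] max_m]] : exists m,
    ((pid m == B) && causal m e) /\ forall g, (pid g == B) && causal g e -> lle g m.
  by apply: (@exists_lle_max _ B f0 seen_f0) => g /andP[/eqP].
have last_m : last_of B e = Some m.
  by apply: last_of_some => // g pid_g cause_g; apply: max_m; rewrite pid_g eqxx.
exists m => //; rewrite /kth pid_m eqxx /=; apply/eqP/eq_card => g; rewrite !inE.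
apply/andP/andP=> [[pid_g le_gm] | [pid_g cause_g]]; split=> //.
  exact: connect_trans (lle_causal le_gm) cause_m.
by apply: max_m; rewrite pid_g cause_g.
Qed.

Lemma last_loc_past_count e p : last_loc e = Some p -> 1 < past_count (pid e) e.
Proof.
case/last_locP=> pid_p /andP[le_pe ne_pe] _.
apply: leq_trans (_ : #|pred2 p e| <= _); first by rewrite card2 ne_pe.
apply/subset_leq_card/subsetP => h; rewrite !inE => /orP[] /eqP ->.
  by rewrite pid_p eqxx lle_causal.
by rewrite eqxx /causal connect0.
Qed.

End LifelineOrder.

Lemma sat_FS (L : finType) (X Val P : Type) (interp : P -> list Val -> bool)
    (M : MSC L X Val) (a b : form L X P) (e : ev M) :
  sat interp (FS a b) e <->
  sat interp b e \/ sat interp a e /\ sat interp (FY (FS a b)) e.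
Proof.
split=> [[f [pid_f le_fe sat_b sat_a]] |
          [sat_b | [sat_a [p [last_p [f [pid_f le_fp sat_b sat_a']]]]]]].
- have [eq_fe | ne_fe] := eqVneq f e; first by left; rewrite -eq_fe.
  have lt_fe : llt f e by rewrite /llt le_fe ne_fe.
  have [p last_p] := last_loc_exists pid_f lt_fe.
  have [pid_p /andP[le_pe _] max_p] := last_locP last_p.
  right; split; first by apply: sat_a => //; apply: lle_refl.
  exists p; split=> //; exists f; split; [by rewrite pid_f pid_p | exact: max_p | done |].
  move=> g pid_g lt_fg le_gp; apply: sat_a => //; first by rewrite pid_g pid_p.
  exact: lle_trans le_gp le_pe.
- exists e; split=> // [|g _ /andP[le_eg ne_eg] le_ge]; first exact: lle_refl.
  by case/eqP: ne_eg; apply: lle_anti.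
- have [pid_p /andP[le_pe ne_pe] max_p] := last_locP last_p.
  exists f; split; [by rewrite pid_f pid_p | exact: lle_trans le_fp le_pe | done |].
  move=> g pid_g lt_fg le_ge; have [-> // | ne_ge] := eqVneq g e.
  by apply: sat_a'; rewrite ?pid_p //; apply: max_p; rewrite /llt ?le_ge ?ne_ge.
Qed.

Lemma In_cat (T : Type) (x : T) (s1 s2 : list T) : In x (s1 ++ s2) <-> In x s1 \/ In x s2.
Proof. by elim: s1 => [|y s1 IH] /=; [tauto | rewrite IH; tauto]. Qed.

Section Subformulas.
Variables (L : finType) (X P : Type).
Implicit Types phi psi chi a b : form L X P.

Lemma subf_self psi : In psi (subf psi).
Proof. by case: psi => *; left. Qed.

Lemma subf_catl a b : In a (subf a ++ subf b).
Proof. by apply/In_cat; left; apply: subf_self. Qed.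

Lemma subf_catr a b : In b (subf a ++ subf b).
Proof. by apply/In_cat; right; apply: subf_self. Qed.

Lemma subf_trans phi psi chi :
  In psi (subf phi) -> In chi (subf psi) -> In chi (subf phi).
Proof.
elim: phi => [p ts | B a IH | a IH | a IHa b IHb | a IHa b IHb | a IHa b IHb | a IH] /=;
  move=> [<- | sub_psi] sub_chi //; right; first [by case: sub_psi | by apply: IH |
  by case/In_cat: sub_psi => sub_psi; apply/In_cat; [left; apply: IHa | right; apply: IHb]].
Qed.

Lemma qvars_subf phi psi x : In psi (subf phi) -> In x (qvars psi) -> In x (qvars phi).
Proof.
elim: phi => [p ts | B a IH | a IH | a IHa b IHb | a IHa b IHb | a IHa b IHb | a IH] /=;
  move=> [<- | sub_psi] in_x //; first [by case: sub_psi | by apply: IH |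
  by case/In_cat: sub_psi => sub_psi; apply/In_cat; [left; apply: IHa | right; apply: IHb]].
Qed.

Lemma uvars_subf phi psi x : In psi (subf phi) -> In x (uvars psi) -> In x (uvars phi).
Proof.
elim: phi => [p ts | B a IH | a IH | a IHa b IHb | a IHa b IHb | a IHa b IHb | a IH] /=;
  move=> [<- | sub_psi] in_x //; first [by case: sub_psi | by apply: IH |
  by case/In_cat: sub_psi => sub_psi; apply/In_cat; [left; apply: IHa | right; apply: IHb]].
Qed.

Variable Phi : list (form L X P).

Lemma in_sub_subf psi chi : in_sub Phi psi -> In chi (subf psi) -> in_sub Phi chi.
Proof.
by case=> phi [in_phi sub_psi] sub_chi; exists phi; split=> //; apply: subf_trans sub_chi.
Qed.

Lemma in_sub_qvar p ts B x : in_sub Phi (FAtom p ts) -> In (TQual B x) ts -> in_Vars Phi x.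
Proof.
case=> phi [in_phi sub_atom] in_t; exists phi; split=> //.
by apply: (qvars_subf sub_atom); apply/in_flat_map; exists (TQual B x); split=> //; left.
Qed.

Lemma in_sub_uvar p ts x : in_sub Phi (FAtom p ts) -> In (TVar L x) ts -> in_UVars Phi x.
Proof.
case=> phi [in_phi sub_atom] in_t; exists phi; split=> //.
by apply: (uvars_subf sub_atom); apply/in_flat_map; exists (TVar L x); split=> //; left.
Qed.

End Subformulas.

Section Monitor.
Variables (L : finType) (X Val P : Type) (interp : P -> list Val -> bool).
Variables (M : MSC L X Val) (Phi : list (form L X P)) (st : mstate L X Val P) (e : ev M).

Local Notation A := (pid e).
Local Notation eval := (Eval interp A st (old st)).
Local Notation holds psi := (sat interp psi e).

Hypothesis vc_past_count : forall B, vc st B = past_count B e.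
Hypothesis remote_view : forall B, B <> A -> 0 < vc st B ->
  forall f : ev M, kth B (vc st B) f ->
    (forall psi, in_sub Phi psi ->
       exists b, view st B psi = Some b /\ (b = true <-> sat interp psi f)) /\
    (forall x, in_Vars Phi x -> var st B x = Some (Defs.val f x)).
Hypothesis remote_view_empty : forall B, B <> A -> vc st B = 0 ->
  (forall psi, in_sub Phi psi -> view st B psi = None) /\
  (forall x, in_Vars Phi x -> var st B x = None).
Hypothesis sigma_val : forall x, in_UVars Phi x -> sigma st x = Defs.val e x.
Hypothesis local_var : forall x, in_Vars Phi x -> var st A x = Some (Defs.val e x).
Hypothesis old_prev : forall psi, in_sub Phi psi -> old st psi = true <-> holds (FY psi).

Lemma vc_gt0_last_of B : 0 < vc st B -> exists2 f, last_of B e = Some f & kth B (vc st B) f.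
Proof. by rewrite !vc_past_count; apply: past_count_gt0_last_of. Qed.

Lemma vc0_last_of B : vc st B = 0 -> last_of B e = None.
Proof. by rewrite vc_past_count; apply: past_count0_last_of. Qed.

Lemma var_term_val B x : in_Vars Phi x -> var st B x = term_val e (TQual B x).
Proof.
move=> Vars_x; rewrite /=; have [-> | /eqP ne_BA] := eqVneq B A.
  by rewrite last_of_self local_var.
have [vc0 | vc_gt0] := posnP (vc st B).
  by rewrite vc0_last_of // (remote_view_empty ne_BA vc0).2.
have [f -> kth_f] := vc_gt0_last_of vc_gt0.
by rewrite (remote_view ne_BA vc_gt0 kth_f).2.
Qed.

Lemma Eval_atom p ts : in_sub Phi (FAtom p ts) -> eval (FAtom p ts) = atom_holds interp e p ts.
Proof.
move=> sub_atom; rewrite /atom_holds /=.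
suff -> : map (fun t => match t with
                         | TVar x => Some (sigma st x)
                         | TQual B x => var st B x
                         end) ts = map (term_val e) ts by [].
apply: map_ext_in => -[x | B x] in_t /=.
  by rewrite sigma_val //; apply: in_sub_uvar sub_atom in_t.
by rewrite var_term_val //; apply: in_sub_qvar sub_atom in_t.
Qed.

Lemma Eval_FY psi : in_sub Phi psi -> eval (FY psi) = true <-> holds (FY psi).
Proof.
move=> sub_psi; rewrite -(old_prev sub_psi) /=.
split=> [/andP[] // | old_psi]; rewrite old_psi andbT.
have [p [last_p _]] := (old_prev sub_psi).1 old_psi.
by rewrite vc_past_count; apply: last_loc_past_count last_p.
Qed.

Lemma Eval_FAt B th : in_sub Phi th -> (eval th = true <-> holds th) ->
  eval (FAt B th) = true <-> holds (FAt B th).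
Proof.
move=> sub_th IH /=; have [-> | /eqP ne_BA] := eqVneq B A.
  rewrite last_of_self IH; split=> [? | [f [[<-] //]]]; by exists e.
have [vc0 | vc_gt0] := posnP (vc st B).
  by rewrite vc0_last_of //; split=> // -[f []].
have [f last_f kth_f] := vc_gt0_last_of vc_gt0.
have [b [view_b b_sat]] := (remote_view ne_BA vc_gt0 kth_f).1 th sub_th.
rewrite view_b last_f /= b_sat.
by split=> [? | [g [[<-] //]]]; exists f.
Qed.

Lemma Eval_correct psi : in_sub Phi psi -> eval psi = true <-> holds psi.
Proof.
elim: psi => [p ts | B a IH | a IH | a IHa b IHb | a IHa b IHb | a IHa b IHb | a IH] sub_psi.
- by rewrite Eval_atom.
- have sub_a := in_sub_subf sub_psi (or_intror (subf_self a)).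
  exact: Eval_FAt sub_a (IH sub_a).
- exact: Eval_FY (in_sub_subf sub_psi (or_intror (subf_self a))).
- have /IHa {}IHa := in_sub_subf sub_psi (or_intror (subf_catl a b)).
  have /IHb {}IHb := in_sub_subf sub_psi (or_intror (subf_catr a b)).
  rewrite sat_FS -(Eval_FY sub_psi) -IHa -IHb /=.
  split=> [/orP[? | /andP ?] | [-> // | /andP ->]]; [by left | by right | by rewrite orbT].
- have /IHa {}IHa := in_sub_subf sub_psi (or_intror (subf_catl a b)).
  have /IHb {}IHb := in_sub_subf sub_psi (or_intror (subf_catr a b)).
  by rewrite /= -IHa -IHb; split=> /andP.
- have /IHa {}IHa := in_sub_subf sub_psi (or_intror (subf_catl a b)).
  have /IHb {}IHb := in_sub_subf sub_psi (or_intror (subf_catr a b)).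
  by rewrite /= -IHa -IHb; split=> /orP.
- have /IH {}IH := in_sub_subf sub_psi (or_intror (subf_self a)).
  by rewrite /= -IH; split=> /negP.
Qed.

End Monitor.

Theorem lemma1 (L : finType) (X Val P : Type) (interp : P -> list Val -> bool)
    (M : MSC L X Val) (Phi : list (form L X P)) (A : L)
    (st : mstate L X Val P) (e : ev M) :
  pid e = A ->
  coherent interp Phi A st e ->
  forall psi, in_sub Phi psi ->
    (Eval interp A st (old st) psi = true <-> sat interp psi e).
Proof.
move=> <- [vc_e remote remote0 [sigma_e var_e] old_e].
exact: (Eval_correct vc_e remote remote0 sigma_e var_e old_e).
Qed.
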